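(* As solutions to the system $S_1=S_2=S_3=T_1=T_2=T_3=0$ (with $S_i,T_i$ as defined in the context), the functions $r,a_1,a_2,b_3$ cannot depend on jet coordinates other than $t,x,u,u_x,u_{xx}$, whereas the functions $b_1,b_2$ cannot depend on jet coordinates other than $t,x,u,u_x,u_{xx},u_{xxx}$.
   Context: Consider a second order scalar evolution equation $u_t = F(t,x,u,u_x,u_{xx})$ with $\partial F/\partial u_{xx} \ne 0$, on its equation manifold with jet coordinates $t,x,u,u_x,u_{xx},u_{xxx},\dots$ and total derivatives $D_x, D_t$. Suppose it has an $\mathfrak{sl}_2$-valued zero-curvature representation $A\,dx + B\,dt$, i.e. $D_t A - D_x B + [A,B] = 0$ on the equation, with characteristic matrix $R$ in the semisimple case: after gauge, $R=\mathrm{diag}(r,-r)$ and $A = \begin{pmatrix} a_1 & a_2 \\ a_2 & -a_1\end{pmatrix}$, $B = \begin{pmatrix} b_1 & b_2+b_3 \\ b_2-b_3 & -b_1\end{pmatrix}$, with $a_2 \ne 0$. The zero-curvature condition and the characteristic-matrix equation then read $S_i = 0 = T_i$, $i=1,2,3$, where $S_1 = -D_t a_1 + D_x b_1 + 2 a_2 b_3$, $S_2 = -D_t a_2 + D_x b_2 - 2 a_1 b_3$, $S_3 = D_x b_3 + 2 a_2 b_1 - 2 a_1 b_2$, $T_1 = -D_t r - \frac{\partial F}{\partial u} r + D_x(\frac{\partial F}{\partial u_x} r) - D_x^2(\frac{\partial F}{\partial u_{xx}} r) - 4 \frac{\partial F}{\partial u_{xx}} r a_2^2$, $T_2 = -b_3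 + 2 \frac{\partial F}{\partial u_{xx}} a_1 a_2$, $T_3 = -b_2 + \frac{\partial F}{\partial u_x} a_2 - 2 D_x(\frac{\partial F}{\partial u_{xx}}) a_2 - 2 \frac{D_x r}{r} \frac{\partial F}{\partial u_{xx}} a_2 - \frac{\partial F}{\partial u_{xx}} D_x a_2$. *)

From HB Require Import structures.
From mathcomp Require Import all_boot all_order all_algebra.
From mathcomp Require Import all_classical all_reals all_analysis.
Set Implicit Arguments. Unset Strict Implicit. Unset Printing Implicit Defensive.
Import Order.TTheory GRing.Theory Num.Theory.
Import numFieldNormedType.Exports.
Local Open Scope classical_set_scope.
Local Open Scope ring_scope.

(* Jet space with coordinates indexed by nat:
     0 = t, 1 = x, (k+2) = u_k  (u_0 = u, u_1 = u_x, u_2 = u_xx, u_3 = u_xxx, ...) *)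
Definition jet (R : realType) := nat -> R.

Definition depends_below (R : realType) (N : nat) (f : jet R -> R) : Prop :=
  forall p q : jet R, (forall i, (i < N)%N -> p i = q i) -> f p = f q.

Definition upd (R : realType) (p : jet R) (i : nat) (s : R) : jet R :=
  fun j => if j == i then s else p j.

Definition pd (R : realType) (i : nat) (f : jet R -> R) : jet R -> R :=
  fun p => derive1 (fun s => f (upd p i s)) (p i).

Definition ext (R : realType) (N : nat) (v : 'rV[R]_N) : jet R :=
  fun i => if insub i is Some j then v ord0 j else 0.

Definition iter_partial (R : realType) (N : nat) (l : seq 'I_N)
  (g : 'rV[R]_N -> R) : 'rV[R]_N -> R :=
  foldr (fun i h => 'D_(delta_mx ord0 i) h) g l.

Definition smoothN (R : realType) (N : nat) (g : 'rV[R]_N -> R) : Prop :=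
  forall (l : seq 'I_N) (v : 'rV[R]_N), differentiable (iter_partial l g) v.

Definition smooth_dfun (R : realType) (f : jet R -> R) : Prop :=
  exists N, depends_below N f /\ smoothN (fun v : 'rV[R]_N => f (ext v)).

Definition dbound (R : realType) (f : jet R -> R) : nat :=
  xget 0%N [set N | depends_below N f].

(* total x-derivative  D_x = d/dx + sum_k u_{k+1} d/du_k *)
Definition Dx (R : realType) (f : jet R -> R) : jet R -> R :=
  fun p => pd 1 f p + \sum_(k < dbound f) p k.+3 * pd k.+2 f p.

(* total t-derivative on the equation manifold of u_t = F:
   D_t = d/dt + sum_k D_x^k(F) d/du_k *)
Definition Dt (R : realType) (F f : jet R -> R) : jet R -> R :=
  fun p => pd 0 f p + \sum_(k < dbound f) iter k (@Dx R) F p * pd k.+2 f p.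

Definition Fu (R : realType) (F : jet R -> R) := pd 2 F.
Definition Fux (R : realType) (F : jet R -> R) := pd 3 F.
Definition Fuxx (R : realType) (F : jet R -> R) := pd 4 F.

Definition S1 (R : realType) (F a1 a2 b1 b2 b3 : jet R -> R) : jet R -> R :=
  fun p => - Dt F a1 p + Dx b1 p + 2 * a2 p * b3 p.
Definition S2 (R : realType) (F a1 a2 b1 b2 b3 : jet R -> R) : jet R -> R :=
  fun p => - Dt F a2 p + Dx b2 p - 2 * a1 p * b3 p.
Definition S3 (R : realType) (F a1 a2 b1 b2 b3 : jet R -> R) : jet R -> R :=
  fun p => Dx b3 p + 2 * a2 p * b1 p - 2 * a1 p * b2 p.
Definition T1 (R : realType) (F r a2 : jet R -> R) : jet R -> R :=
  fun p => - Dt F r p - Fu F p * r p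
           + Dx (fun q => Fux F q * r q) p
           - Dx (Dx (fun q => Fuxx F q * r q)) p
           - 4 * Fuxx F p * r p * a2 p ^+ 2.
Definition T2 (R : realType) (F a1 a2 b3 : jet R -> R) : jet R -> R :=
  fun p => - b3 p + 2 * Fuxx F p * a1 p * a2 p.
Definition T3 (R : realType) (F r a2 b2 : jet R -> R) : jet R -> R :=
  fun p => - b2 p + Fux F p * a2 p - 2 * Dx (Fuxx F) p * a2 p
           - 2 * (Dx r p / r p) * Fuxx F p * a2 p - Fuxx F p * Dx a2 p.

From HB Require Import structures.
From mathcomp Require Import all_boot all_order all_algebra.
From mathcomp Require Import all_classical all_reals all_analysis.
From mathcomp Require Import ring lra zify.
Import Order.TTheory GRing.Theory Num.Theory.
Import numFieldNormedType.Exports.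
Local Open Scope ring_scope.
Set Implicit Arguments. Unset Strict Implicit. Unset Printing Implicit Defensive.

(* Let u_n, n >= 3, be the highest jet coordinate on which r, a1, a2 may
   depend.  Since D_t and D_x^2 raise the order by two, every equation of the
   system is affine in u_(n+2), and its coefficient there can be read off:
   in T1 it is -2 F_(u_xx) dr/du_n; in S2, after eliminating b2 with T3, it
   is -2 F_(u_xx) da2/du_n; in S1, after eliminating b3 and b1 with T2 and
   S3, it is -2 F_(u_xx) da1/du_n.  As F_(u_xx) never vanishes, r, a2 and a1
   successively lose the coordinate u_n, and descending induction brings the
   order down to u_xx.  Then T2, T3 and S3 express b3, b2, b1 through r, a1,
   a2 and at most one x-derivative of them. *)

Section Jets.
Variable R : realType.
Implicit Types (f g h c : jet R -> R) (p q : jet R).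

Definition indep i f := forall p s, f (upd p i s) = f p.

Definition derivable_along i f :=
  forall p, derivable (fun s => f (upd p i s)) (p i) 1.

Definition affine_in i h c :=
  indep i c /\ exists2 rest, indep i rest & forall p, h p = p i * c p + rest p.

Lemma upd_eq p i s : upd p i s i = s.
Proof. by rewrite /upd eqxx. Qed.

Lemma upd_neq p i j s : j != i -> upd p i s j = p j.
Proof. by rewrite /upd => /negbTE ->. Qed.

Lemma upd_id p i : upd p i (p i) = p.
Proof. by apply/funext => j; rewrite /upd; case: eqP => // ->. Qed.

Lemma upd_upd p i s t : upd (upd p i s) i t = upd p i t.
Proof. by apply/funext => j; rewrite /upd; case: (j == i). Qed.

Lemma affine_in_intro i h c rest : indep i c -> indep i rest ->
  (forall p, h p = p i * c p + rest p) -> affine_in i h c.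
Proof. by move=> Hc Hr Eh; split=> //; exists rest. Qed.

Lemma eq_affine_in i h c c' : c =1 c' -> affine_in i h c -> affine_in i h c'.
Proof. by move=> /funext <-. Qed.

Lemma affine_in_indep i h : indep i h -> affine_in i h (fun=> 0).
Proof. by move=> Hh; apply: affine_in_intro Hh _ => // p; rewrite mulr0 add0r. Qed.

Lemma affine_inD i h g c d : affine_in i h c -> affine_in i g d ->
  affine_in i (fun p => h p + g p) (fun p => c p + d p).
Proof.
move=> [Hc [rh Hrh Eh]] [Hd [rg Hrg Eg]].
apply: (@affine_in_intro _ _ _ (fun p => rh p + rg p)).
- by move=> p s /=; rewrite Hc Hd.
- by move=> p s /=; rewrite Hrh Hrg.
- by move=> p; rewrite Eh Eg; ring.
Qed.

Lemma affine_inN i h c : affine_in i h c ->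
  affine_in i (fun p => - h p) (fun p => - c p).
Proof.
move=> [Hc [rh Hrh Eh]].
apply: (@affine_in_intro _ _ _ (fun p => - rh p)).
- by move=> p s /=; rewrite Hc.
- by move=> p s /=; rewrite Hrh.
- by move=> p; rewrite Eh; ring.
Qed.

Lemma affine_inB i h g c d : affine_in i h c -> affine_in i g d ->
  affine_in i (fun p => h p - g p) (fun p => c p - d p).
Proof. by move=> Hh /affine_inN; apply: affine_inD. Qed.

Lemma affine_inMl i (k : jet R -> R) h c : indep i k -> affine_in i h c ->
  affine_in i (fun p => k p * h p) (fun p => k p * c p).
Proof.
move=> Hk [Hc [rh Hrh Eh]].
apply: (@affine_in_intro _ _ _ (fun p => k p * rh p)).
- by move=> p s /=; rewrite Hk Hc.
- by move=> p s /=; rewrite Hk Hrh.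
- by move=> p; rewrite Eh; ring.
Qed.

Lemma affine_inMr i (k : jet R -> R) h c : indep i k -> affine_in i h c ->
  affine_in i (fun p => h p * k p) (fun p => c p * k p).
Proof.
move=> Hk [Hc [rh Hrh Eh]].
apply: (@affine_in_intro _ _ _ (fun p => rh p * k p)).
- by move=> p s /=; rewrite Hk Hc.
- by move=> p s /=; rewrite Hk Hrh.
- by move=> p; rewrite Eh; ring.
Qed.

Lemma affine_in_coef_eq0 i h c : affine_in i h c -> (forall p, h p = 0) ->
  forall p, c p = 0.
Proof.
move=> [Hc [rh Hrh Eh]] h0 p.
have := Eh (upd p i 1); have := Eh (upd p i 0).
by rewrite !h0 !upd_eq !Hc !Hrh; lra.
Qed.

Lemma pd_affine_in i h c p : affine_in i h c -> pd i h p = c p.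
Proof.
move=> [Hc [rh Hrh Eh]]; rewrite /pd.
have -> : (fun s => h (upd p i s)) = (fun s => s * c p + rh p).
  by apply/funext => s; rewrite Eh upd_eq Hc Hrh.
rewrite derive1E deriveD // deriveMr // derive_id derive_cst; ring.
Qed.

Lemma pd_indep i f p : indep i f -> pd i f p = 0.
Proof. by move/affine_in_indep/pd_affine_in. Qed.

Lemma pd_indepMl i (k : jet R -> R) f p : indep i k -> derivable_along i f ->
  pd i (fun q => k q * f q) p = k p * pd i f p.
Proof.
move=> Hk Df; rewrite /pd.
have -> : (fun s => k (upd p i s) * f (upd p i s)) = k p \*o (fun s => f (upd p i s)).
  by apply/funext => s /=; rewrite Hk.
by rewrite !derive1E deriveMl.
Qed.

Lemma indep_of_pd_eq0 i f : derivable_along i f -> (forall p, pd i f p = 0) ->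
  indep i f.
Proof.
move=> Df pd0 p s.
have := @is_derive_0_is_cst R (fun t => f (upd p i t)) s (p i).
rewrite upd_id; apply=> x.
have Dfx : derivable (fun t => f (upd p i t)) x 1.
  by have := Df (upd p i x); under eq_fun do rewrite upd_upd; rewrite upd_eq.
apply: DeriveDef => //; rewrite -derive1E.
have := pd0 (upd p i x); rewrite /pd upd_eq.
by under eq_fun do rewrite upd_upd.
Qed.


Lemma smooth_dfun_derivable_along i f : smooth_dfun f -> derivable_along i f.
Proof.
move=> [N [Hf HG]] p.
have [iN|Ni] := ltnP i N; last first.
  have -> : (fun s => f (upd p i s)) = cst (f p).
    apply/funext => s; apply: Hf => j jN; rewrite upd_neq //.
    by apply: contraTneq jN => ->; rewrite -leqNgt.
  exact: derivable_cst.
pose e : 'rV[R]_N := delta_mx ord0 (Ordinal iN).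
pose v : 'rV[R]_N := \row_(j < N) p j.
apply/derivable1P.
have -> : (fun x => f (upd p i (x *: 1 + p i))) = (fun x => f (ext (x *: e + v))).
  apply/funext => x; apply: Hf => j jN.
  rewrite /ext insubT /= !mxE /upd eqxx /=.
  have -> : (Sub j jN == Ordinal iN :> 'I_N) = (j == i) by [].
  case: eqP => [->|_] /=; first by rewrite [_%:A]mulr1 mulr1.
  by rewrite mulr0 add0r.
have dG : differentiable (fun v => f (ext v)) v := HG [::] v.
exact: (derivable1P (fun w => f (ext w)) v e).1 (diff_derivable dG).
Qed.

Lemma depends_below_indep K i f : depends_below K f -> (K <= i)%N -> indep i f.
Proof.
move=> Hf Ki p s; apply: Hf => j jK; rewrite upd_neq //.
by apply: contraTneq jK => ->; rewrite -leqNgt.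
Qed.

Lemma depends_below_le K K' f : (K <= K')%N -> depends_below K f ->
  depends_below K' f.
Proof. by move=> KK' Hf p q E; apply: Hf => j jK; apply: E; apply: leq_trans KK'. Qed.

Lemma depends_below_pred K f : depends_below K.+1 f -> indep K f ->
  depends_below K f.
Proof.
move=> Hf HK p q E; rewrite -(HK p (q K)); apply: Hf => j; rewrite ltnS leq_eqVlt.
by case/predU1P => [->|jK]; rewrite ?upd_eq // upd_neq ?E // ltn_eqF.
Qed.

Lemma depends_below_pd K j f : depends_below K f -> depends_below K (pd j f).
Proof.
move=> Hf p q E; have [jK|Kj] := ltnP j K; last first.
  by rewrite !pd_indep //; apply: depends_below_indep Hf Kj.
rewrite /pd E //; congr (derive1 _ _); apply/funext => s.
by apply: Hf => k kK; rewrite /upd E.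
Qed.

Lemma dbound_depends_below K f : depends_below K f -> depends_below (dbound f) f.
Proof. by move=> Hf; apply: (@xgetPex _ 0%N [set N | depends_below N f]); exists K. Qed.

Lemma sum_pd_widen K A f (t : nat -> R) p : depends_below K.+2 f -> (K <= A)%N ->
  \sum_(k < A) t k * pd k.+2 f p = \sum_(k < K) t k * pd k.+2 f p.
Proof.
move=> Hf KA; rewrite (big_ord_widen A (fun j => t j * pd j.+2 f p) KA).
rewrite [RHS]big_mkcond /=; apply: eq_bigr => k _.
case: ltnP => // Kk; rewrite pd_indep ?mulr0 //.
by apply: depends_below_indep Hf _.
Qed.

Lemma sum_pd_dbound K f (t : nat -> R) p : depends_below K.+2 f ->
  \sum_(k < dbound f) t k * pd k.+2 f p = \sum_(k < K) t k * pd k.+2 f p.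
Proof.
move=> Hf; have Hd := depends_below_le (leqW (leqnSn _)) (dbound_depends_below Hf).
by rewrite -(sum_pd_widen _ _ Hd (leq_addr K _)) (sum_pd_widen _ _ Hf (leq_addl _ _)).
Qed.

Lemma DxE K f p : depends_below K.+2 f ->
  Dx f p = pd 1 f p + \sum_(k < K) p k.+3 * pd k.+2 f p.
Proof. by move=> Hf; rewrite /Dx (sum_pd_dbound (fun j => p j.+3) _ Hf). Qed.

Lemma DtE K F f p : depends_below K.+2 f ->
  Dt F f p = pd 0 f p + \sum_(k < K) iter k (@Dx R) F p * pd k.+2 f p.
Proof. by move=> Hf; rewrite /Dt (sum_pd_dbound (fun j => iter j (@Dx R) F p) _ Hf). Qed.

Lemma Dx_depends_below K f : depends_below K.+2 f -> depends_below K.+3 (Dx f).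
Proof.
move=> Hf p q E; rewrite !(DxE _ Hf).
have E' j : (j < K.+2)%N -> p j = q j by move=> jK; apply: E; apply: ltnW.
rewrite (depends_below_pd _ Hf E'); congr (_ + _); apply: eq_bigr => k _.
by rewrite (depends_below_pd _ Hf E') E // !ltnS.
Qed.

Lemma Dx_affine_in m h : depends_below m.+3 h -> affine_in m.+3 (Dx h) (pd m.+2 h).
Proof.
move=> Hh; have Ipd j := depends_below_indep (depends_below_pd j Hh) (leqnn _).
apply: (@affine_in_intro _ _ _ (fun p => pd 1 h p + \sum_(k < m) p k.+3 * pd k.+2 h p)).
- exact: Ipd.
- move=> p s /=; rewrite Ipd; congr (_ + _); apply: eq_bigr => k _.
  by rewrite Ipd upd_neq // ltn_eqF // !ltnS.
- by move=> p; rewrite (DxE _ Hh) big_ord_recr /=; ring.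
Qed.

Lemma iter_Dx_depends_below n k F : depends_below n.+2 F ->
  depends_below (n + k).+2 (iter k (@Dx R) F).
Proof.
move=> HF; elim: k => [|k IH] /=; first by rewrite addn0.
by rewrite addnS; apply: Dx_depends_below.
Qed.

Lemma iter_Dx_affine_in n k F : depends_below n.+3 F ->
  affine_in (n + k).+3 (iter k.+1 (@Dx R) F) (pd n.+2 F).
Proof.
move=> HF; elim: k => [|k IH]; first by rewrite addn0; apply: Dx_affine_in.
have Hk : depends_below (n + k).+4 (iter k.+1 (@Dx R) F).
  by rewrite -addnS; apply: (iter_Dx_depends_below (n := n.+1)).
rewrite addnS; apply: eq_affine_in (Dx_affine_in Hk) => p.
exact: pd_affine_in IH.
Qed.

(* For m = 0 the top term of D_t f involves F itself, which need not be affine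
   in u_xx. *)
Lemma Dt_affine_in F m f : (0 < m)%N -> depends_below 5 F -> depends_below m.+3 f ->
  affine_in m.+4 (Dt F f) (fun p => Fuxx F p * pd m.+2 f p).
Proof.
case: m => [//|m] _ HF Hf; have Ipd j : indep m.+1.+4 (pd j f).
  exact: depends_below_indep (depends_below_pd j Hf) (leqnSn _).
have -> : Dt F f = fun p =>
    (pd 0 f p + \sum_(k < m.+1) iter k (@Dx R) F p * pd k.+2 f p)
    + iter m.+1 (@Dx R) F p * pd m.+3 f p.
  by apply/funext => p; rewrite (DtE _ _ Hf) big_ord_recr /= addrA.
apply: eq_affine_in (affine_inD (affine_in_indep _)
  (affine_inMr (Ipd m.+3) (iter_Dx_affine_in (n := 2) m HF))) => [p|p s /=].
  by rewrite add0r.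
rewrite Ipd; congr (_ + _); apply: eq_bigr => k _.
rewrite Ipd (depends_below_indep (iter_Dx_depends_below (n := 3) (k := k) HF)) //.
by have := ltn_ord k; lia.
Qed.

End Jets.

Section CharacteristicSystem.
Variables (R : realType) (F r a1 a2 b1 b2 b3 : jet R -> R).
Hypotheses (HF : depends_below 5 F) (HFuxx : forall p, Fuxx F p != 0).
Hypotheses (Dr : forall i, derivable_along i r)
  (Da1 : forall i, derivable_along i a1) (Da2 : forall i, derivable_along i a2).
Hypothesis Ha2 : forall p, a2 p != 0.
Hypotheses (HS1 : forall p, S1 F a1 a2 b1 b2 b3 p = 0)
  (HS2 : forall p, S2 F a1 a2 b1 b2 b3 p = 0)
  (HS3 : forall p, S3 F a1 a2 b1 b2 b3 p = 0)
  (HT1 : forall p, T1 F r a2 p = 0)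
  (HT2 : forall p, T2 F a1 a2 b3 p = 0)
  (HT3 : forall p, T3 F r a2 b2 p = 0).

Lemma Fuxx_mul_eq0 p x : Fuxx F p * x = 0 -> x = 0.
Proof. by move/eqP; rewrite mulf_eq0 (negbTE (HFuxx p)) => /eqP. Qed.

Lemma Fu_depends_below : depends_below 5 (Fu F).
Proof. exact: depends_below_pd. Qed.

Lemma Fux_depends_below : depends_below 5 (Fux F).
Proof. exact: depends_below_pd. Qed.

Lemma Fuxx_depends_below : depends_below 5 (Fuxx F).
Proof. exact: depends_below_pd. Qed.

Lemma Fuxx_indep i : (5 <= i)%N -> indep i (Fuxx F).
Proof. exact: depends_below_indep Fuxx_depends_below. Qed.

Lemma b3E p : b3 p = 2 * Fuxx F p * a1 p * a2 p.
Proof. by have := HT2 p; rewrite /T2; lra. Qed.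

Lemma b2E p : b2 p = Fux F p * a2 p - 2 * Dx (Fuxx F) p * a2 p
  - 2 * (Dx r p / r p) * Fuxx F p * a2 p - Fuxx F p * Dx a2 p.
Proof. by have := HT3 p; rewrite /T3; lra. Qed.

Lemma b1E p : b1 p = (2 * a1 p * b2 p - Dx b3 p) / (2 * a2 p).
Proof.
have := HS3 p; rewrite /S3 => S3p.
apply: (canRL (mulfK _)); first by rewrite mulf_neq0.
by lra.
Qed.

Lemma b3_depends_below K : (5 <= K)%N ->
  depends_below K a1 -> depends_below K a2 -> depends_below K b3.
Proof.
move=> K5 H1 H2 p q E; have HFuxx5 := depends_below_le K5 Fuxx_depends_below.
by rewrite !b3E (H1 _ _ E) (H2 _ _ E) (HFuxx5 _ _ E).
Qed.

Lemma b2_depends_below K : (5 <= K.+2)%N ->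
  depends_below K.+2 r -> depends_below K.+2 a2 -> depends_below K.+3 b2.
Proof.
move=> K5 Hr H2 p q E.
have E' i : (i < K.+2)%N -> p i = q i by move=> iK; apply/E/ltnW.
have HFux := depends_below_le K5 Fux_depends_below.
have HFuxx5 := depends_below_le K5 Fuxx_depends_below.
have HDFuxx := depends_below_le (K5 : (6 <= K.+3)%N)
  (Dx_depends_below Fuxx_depends_below).
rewrite !b2E (HFux _ _ E') (HFuxx5 _ _ E') (HDFuxx _ _ E) (Hr _ _ E') (H2 _ _ E').
by rewrite (Dx_depends_below Hr E) (Dx_depends_below H2 E).
Qed.

Lemma b1_depends_below K : (5 <= K.+2)%N -> depends_below K.+2 r ->
  depends_below K.+2 a1 -> depends_below K.+2 a2 -> depends_below K.+3 b1.
Proof.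
move=> K5 Hr H1 H2 p q E.
have E' i : (i < K.+2)%N -> p i = q i by move=> iK; apply/E/ltnW.
have Hb3 := b3_depends_below K5 H1 H2.
rewrite !b1E (b2_depends_below K5 Hr H2 E) (Dx_depends_below Hb3 E).
by rewrite (H1 _ _ E') (H2 _ _ E').
Qed.

(* Jet index m.+2 is u_m, the top coordinate (m >= 3); the equations are read
   off at index m.+4, i.e. at u_(m+2). *)
Lemma r_indep_top m : (5 <= m.+2)%N ->
  depends_below m.+3 r -> depends_below m.+3 a2 -> indep m.+2 r.
Proof.
move=> m5 Hr H2; have m5_3 := leqW m5; have m5_4 := leqW m5_3.
have m0 : (0 < m)%N by lia.
pose psi q := Fuxx F q * r q.
have Hpsi : depends_below m.+3 psi.
  move=> p q E; rewrite /psi (Hr _ _ E).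
  by rewrite (depends_below_le m5_3 Fuxx_depends_below E).
have Ir := depends_below_indep Hr (leqnSn _).
have I_Fur : indep m.+4 (fun p => Fu F p * r p).
  by move=> p s /=; rewrite Ir (depends_below_indep Fu_depends_below m5_4).
have I_DxFuxr : indep m.+4 (Dx (fun p => Fux F p * r p)).
  apply: (depends_below_indep (Dx_depends_below (K := m.+1) _) (leqnn _)).
  by move=> p q E; rewrite (Hr _ _ E) (depends_below_le m5_3 Fux_depends_below E).
have I_last : indep m.+4 (fun p => 4 * Fuxx F p * r p * a2 p ^+ 2).
  by move=> p s /=; rewrite Ir Fuxx_indep // (depends_below_indep H2 (leqnSn _)).
have ADxpsi := Dx_affine_in (m := m) Hpsi.
have AT1 := affine_inB (affine_inB (affine_inD (affine_inB
  (affine_inN (Dt_affine_in m0 HF Hr)) (affine_in_indep I_Fur))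
  (affine_in_indep I_DxFuxr)) (Dx_affine_in (Dx_depends_below Hpsi)))
  (affine_in_indep I_last).
apply: (indep_of_pd_eq0 (@Dr m.+2)) => p; apply: (@Fuxx_mul_eq0 p).
have := affine_in_coef_eq0 AT1 HT1 p.
rewrite /= (pd_affine_in _ ADxpsi) /psi pd_indepMl //; last exact: Fuxx_indep.
by lra.
Qed.

Lemma b2_affine_in m : (5 <= m.+2)%N -> depends_below m.+2 r ->
  depends_below m.+3 a2 -> affine_in m.+3 b2 (fun p => - (Fuxx F p * pd m.+2 a2 p)).
Proof.
move=> m5 Hr H2; have m5_3 := leqW m5.
have I_rest : indep m.+3 (fun p => Fux F p * a2 p - 2 * Dx (Fuxx F) p * a2 p
    - 2 * (Dx r p / r p) * Fuxx F p * a2 p).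
  have I2 := depends_below_indep H2 (leqnn _).
  have Ir := depends_below_indep Hr (leqnSn _).
  have IDr := depends_below_indep (Dx_depends_below (K := m) Hr) (leqnn _).
  have IDFuxx := depends_below_indep (Dx_depends_below Fuxx_depends_below)
    (m5 : (6 <= m.+3)%N).
  have IFux := depends_below_indep Fux_depends_below m5_3.
  by move=> p s /=; rewrite I2 Ir IDr IDFuxx IFux Fuxx_indep.
have -> : b2 = fun p => (Fux F p * a2 p - 2 * Dx (Fuxx F) p * a2 p
    - 2 * (Dx r p / r p) * Fuxx F p * a2 p) - Fuxx F p * Dx a2 p.
  exact/funext/b2E.
apply: eq_affine_in (affine_inB (affine_in_indep I_rest)
  (affine_inMl (Fuxx_indep m5_3) (Dx_affine_in (m := m) H2))) => p.
by rewrite sub0r.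
Qed.

Lemma a2_indep_top m : (5 <= m.+2)%N -> depends_below m.+2 r ->
  depends_below m.+3 a1 -> depends_below m.+3 a2 -> indep m.+2 a2.
Proof.
move=> m5 Hr H1 H2; have m0 : (0 < m)%N by lia.
have Hb2 := b2_depends_below (K := m.+1) (leqW m5) (depends_below_le (leqnSn _) Hr) H2.
have I_a1b3 : indep m.+4 (fun p => 2 * a1 p * b3 p).
  have Hb3 := b3_depends_below (leqW m5) H1 H2.
  move=> p s /=.
  by rewrite (depends_below_indep H1 (leqnSn _)) (depends_below_indep Hb3 (leqnSn _)).
have AS2 := affine_inB (affine_inD (affine_inN (Dt_affine_in m0 HF H2))
  (Dx_affine_in Hb2)) (affine_in_indep I_a1b3).
apply: (indep_of_pd_eq0 (@Da2 m.+2)) => p; apply: (@Fuxx_mul_eq0 p).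
have := affine_in_coef_eq0 AS2 HS2 p.
by rewrite /= (pd_affine_in _ (b2_affine_in m5 Hr H2)); lra.
Qed.

Lemma b1_affine_in m : (5 <= m.+2)%N -> depends_below m.+2 r ->
  depends_below m.+3 a1 -> depends_below m.+2 a2 ->
  affine_in m.+3 b1 (fun p => - (Fuxx F p * pd m.+2 a1 p)).
Proof.
move=> m5 Hr H1 H2.
have I2 := depends_below_indep H2 (leqnSn _).
have I_a1b2 : indep m.+3 (fun p => 2 * a1 p * b2 p).
  have Hb2 := b2_depends_below (K := m) m5 Hr H2.
  by move=> p s /=; rewrite (depends_below_indep H1 (leqnn _)) (depends_below_indep Hb2).
have I_inv : indep m.+3 (fun p => (2 * a2 p)^-1) by move=> p s /=; rewrite I2.
have pd_b3 p : pd m.+2 b3 p = 2 * Fuxx F p * a2 p * pd m.+2 a1 p.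
  have -> : b3 = fun p => (2 * Fuxx F p * a2 p) * a1 p.
    by apply/funext => q; rewrite b3E; ring.
  by rewrite pd_indepMl // => q s /=; rewrite (depends_below_indep H2) ?Fuxx_indep.
have Hb3 := b3_depends_below (leqW m5) H1 (depends_below_le (leqnSn _) H2).
have -> : b1 = fun p => (2 * a1 p * b2 p - Dx b3 p) * (2 * a2 p)^-1.
  exact/funext/b1E.
apply: eq_affine_in (affine_inMr I_inv
  (affine_inB (affine_in_indep I_a1b2) (Dx_affine_in (m := m) Hb3))) => p.
by rewrite pd_b3; field; rewrite ?mulf_neq0.
Qed.

Lemma a1_indep_top m : (5 <= m.+2)%N -> depends_below m.+2 r ->
  depends_below m.+3 a1 -> depends_below m.+2 a2 -> indep m.+2 a1.
Proof.
move=> m5 Hr H1 H2; have m0 : (0 < m)%N by lia.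
have le23 := leqnSn m.+2.
have Hb1 := b1_depends_below (K := m.+1) (leqW m5) (depends_below_le le23 Hr) H1
  (depends_below_le le23 H2).
have I_a2b3 : indep m.+4 (fun p => 2 * a2 p * b3 p).
  have Hb3 := b3_depends_below (leqW m5) H1 (depends_below_le le23 H2).
  move=> p s /=; rewrite (depends_below_indep Hb3 (leqnSn _)).
  by rewrite (depends_below_indep H2 (leqW le23)).
have AS1 := affine_inD (affine_inD (affine_inN (Dt_affine_in m0 HF H1))
  (Dx_affine_in Hb1)) (affine_in_indep I_a2b3).
apply: (indep_of_pd_eq0 (@Da1 m.+2)) => p; apply: (@Fuxx_mul_eq0 p).
have := affine_in_coef_eq0 AS1 HS1 p.
by rewrite /= (pd_affine_in _ (b1_affine_in m5 Hr H1 H2)); lra.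
Qed.

Lemma depends_below_drop_top m : (5 <= m.+2)%N ->
  depends_below m.+3 r -> depends_below m.+3 a1 -> depends_below m.+3 a2 ->
  [/\ depends_below m.+2 r, depends_below m.+2 a1 & depends_below m.+2 a2].
Proof.
move=> m5 Hr H1 H2.
have Hr' := depends_below_pred Hr (r_indep_top m5 Hr H2).
have H2' := depends_below_pred H2 (a2_indep_top m5 Hr' H1 H2).
by split=> //; apply: depends_below_pred H1 (a1_indep_top m5 Hr' H1 H2').
Qed.

Lemma characteristic_system_orders M :
  depends_below M r -> depends_below M a1 -> depends_below M a2 ->
  (depends_below 5 r /\ depends_below 5 a1 /\ depends_below 5 a2 /\
   depends_below 5 b3) /\ (depends_below 6 b1 /\ depends_below 6 b2).
Proof.
move=> HrM H1M H2M.
have [Hr H1 H2] : [/\ depends_below 5 r, depends_below 5 a1 & depends_below 5 a2].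
  have lift (f : jet R -> R) : depends_below M f -> depends_below (5 + M) f.
    exact: depends_below_le (leq_addl 5 M).
  move: (lift _ HrM) (lift _ H1M) (lift _ H2M).
  elim: M {HrM H1M H2M lift} => [//|m IHm Hr H1 H2].
  by have [] := depends_below_drop_top (m := m.+3) isT Hr H1 H2; exact: IHm.
split; first by do !split=> //; apply: b3_depends_below.
by split; [apply: b1_depends_below | apply: b2_depends_below].
Qed.

End CharacteristicSystem.

Theorem proposition3 (R : realType) (F r a1 a2 b1 b2 b3 : jet R -> R) :
  (* the evolution equation u_t = F(t,x,u,u_x,u_xx), F smooth, F_{u_xx} <> 0 *)
  smooth_dfun F -> depends_below 5 F -> (forall p, Fuxx F p != 0) ->
  (* the unknowns are smooth differential functions *)
  smooth_dfun r -> smooth_dfun a1 -> smooth_dfun a2 ->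
  smooth_dfun b1 -> smooth_dfun b2 -> smooth_dfun b3 ->
  (* semisimple case: r <> 0, and a_2 <> 0 *)
  (forall p, r p != 0) -> (forall p, a2 p != 0) ->
  (* the system S_1 = S_2 = S_3 = T_1 = T_2 = T_3 = 0 *)
  (forall p, S1 F a1 a2 b1 b2 b3 p = 0) ->
  (forall p, S2 F a1 a2 b1 b2 b3 p = 0) ->
  (forall p, S3 F a1 a2 b1 b2 b3 p = 0) ->
  (forall p, T1 F r a2 p = 0) ->
  (forall p, T2 F a1 a2 b3 p = 0) ->
  (forall p, T3 F r a2 b2 p = 0) ->
  (* r, a1, a2, b3 depend only on t,x,u,u_x,u_xx ; b1, b2 also on u_xxx *)
  (depends_below 5 r /\ depends_below 5 a1 /\ depends_below 5 a2 /\
   depends_below 5 b3) /\ (depends_below 6 b1 /\ depends_below 6 b2).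
Proof.
move=> _ HF HFuxx sr sa1 sa2 _ _ _ _ Ha2 HS1 HS2 HS3 HT1 HT2 HT3.
have Dr i : derivable_along i r := smooth_dfun_derivable_along sr.
have Da1 i : derivable_along i a1 := smooth_dfun_derivable_along sa1.
have Da2 i : derivable_along i a2 := smooth_dfun_derivable_along sa2.
have [Nr [HNr _]] := sr; have [N1 [HN1 _]] := sa1; have [N2 [HN2 _]] := sa2.
apply: (characteristic_system_orders HF HFuxx Dr Da1 Da2 Ha2
  HS1 HS2 HS3 HT1 HT2 HT3 (M := Nr + N1 + N2)).
- by apply: depends_below_le _ HNr; lia.
- by apply: depends_below_le _ HN1; lia.
- by apply: depends_below_le _ HN2; lia.
Qed.
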